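(* Let $(R,L,[-,-],\rho,\rhd)$ be a post-Lie-Rinehart algebra over a field $k$ of characteristic $0$. Then the algebra of elementary $R$-module endomorphisms $\mathrm{El}_R(L)$ is the $R$-subalgebra of $(\mathrm{End}_R(L),\circ)$ generated by $\{dX,\ \delta X : X\in L\}$.
   Context: A Lie-Rinehart algebra $(R,L,\llbracket-,-\rrbracket,\rho)$: $R$ a commutative $k$-algebra, $L$ a $k$-Lie algebra that is an $R$-module, $\rho\colon L\to\mathrm{Der}_k(R)$ an $R$-linear Lie algebra morphism (write $X.f=\rho(X)(f)$), with $\llbracket X,fY\rrbracket=(X.f)Y+f\llbracket X,Y\rrbracket$. A post-Lie-Rinehart algebra is such a Lie-Rinehart algebra together with a connection $\rhd$ ($k$-bilinear, $R$-linear in the first argument, $X\rhd(fY)=(X.f)Y+fX\rhd Y$) that is flat ($\llbracket X,Y\rrbracket\rhd Z=X\rhd(Y\rhd Z)-Y\rhd(X\rhd Z)$) and whose torsion $T(X,Y)=X\rhd Y-Y\rhd X-\llbracket X,Y\rrbracket$ is parallel ($X\rhd T(Y,Z)=T(X\rhd Y,Z)+T(Y,X\rhd Z)$); the bracket $[X,Y]=-T(X,Y)$ is the associated $R$-bilinear post-Lie bracket. For $X\in L$ define $dX,\delta X\in\mathrm{End}_R(L)$ by $dX(Z)=Z\rhd X$ and $\delta X(Z)=T(Z,X)$. For $\nu\in\mathrm{End}_R(L)$ and $X\in L$ let $(\hat\nabla_X\nu)(Y)=X\rhd(\nu(Y))-\nu(X\rhd Y)$. $\mathrm{El}_R(L)$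 is the $R$-subalgebra of $(\mathrm{End}_R(L),\circ)$ generated by all $\hat\nabla_{X_1}\hat\nabla_{X_2}\cdots\hat\nabla_{X_m}dY$ and $\hat\nabla_{X_1}\cdots\hat\nabla_{X_m}\delta Y$ with $m\ge0$ and $X_1,\dots,X_m,Y\in L$. *)

From HB Require Import structures.
From mathcomp Require Import all_boot all_algebra.
Set Implicit Arguments. Unset Strict Implicit. Unset Printing Implicit Defensive.
Import GRing.Theory.
Local Open Scope ring_scope.

(* R : commutative k-algebra (comAlgType k); L : R-module (lmodType R).
   The k-module structure on L is the one induced via k -> R, c |-> c%:A. *)

Section PLR.
Variables (k : fieldType) (R : comAlgType k) (L : lmodType R).

Definition is_k_derivation (D : R -> R) : Prop :=
  [/\ forall a b, D (a + b) = D a + D b,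
      forall (c : k) a, D (c%:A * a) = c%:A * D a &
      forall a b, D (a * b) = a * D b + D a * b].

Record is_post_Lie_Rinehart (br : L -> L -> L) (rho : L -> R -> R)
    (rhd : L -> L -> L) : Prop := {
  br_addl : forall X Y Z, br (X + Y) Z = br X Z + br Y Z;
  br_addr : forall X Y Z, br X (Y + Z) = br X Y + br X Z;
  br_scalel : forall (c : k) X Y, br (c%:A *: X) Y = c%:A *: br X Y;
  br_scaler : forall (c : k) X Y, br X (c%:A *: Y) = c%:A *: br X Y;
  br_alt : forall X, br X X = 0;
  br_jacobi : forall X Y Z,
    br X (br Y Z) + br Y (br Z X) + br Z (br X Y) = 0;
  rho_der : forall X, is_k_derivation (rho X);
  rho_add : forall X Y f, rho (X + Y) f = rho X f + rho Y f;
  rho_scale : forall (g : R) X f, rho (g *: X) f = g * rho X f;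
  rho_br : forall X Y f, rho (br X Y) f = rho X (rho Y f) - rho Y (rho X f);
  br_leibniz : forall X (f : R) Y, br X (f *: Y) = rho X f *: Y + f *: br X Y;
  rhd_addl : forall X Y Z, rhd (X + Y) Z = rhd X Z + rhd Y Z;
  rhd_addr : forall X Y Z, rhd X (Y + Z) = rhd X Y + rhd X Z;
  rhd_scalek : forall (c : k) X Y, rhd X (c%:A *: Y) = c%:A *: rhd X Y;
  rhd_scalel : forall (f : R) X Y, rhd (f *: X) Y = f *: rhd X Y;
  rhd_leibniz : forall X (f : R) Y, rhd X (f *: Y) = rho X f *: Y + f *: rhd X Y;
  rhd_flat : forall X Y Z, rhd (br X Y) Z = rhd X (rhd Y Z) - rhd Y (rhd X Z);
  torsion_parallel : forall X Y Z,
    rhd X (rhd Y Z - rhd Z Y - br Y Z) =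
      (rhd (rhd X Y) Z - rhd Z (rhd X Y) - br (rhd X Y) Z)
    + (rhd Y (rhd X Z) - rhd (rhd X Z) Y - br Y (rhd X Z))
}.

Variables (br : L -> L -> L) (rhd : L -> L -> L).

Definition torsion (X Y : L) : L := rhd X Y - rhd Y X - br X Y.

Definition dop (X : L) : L -> L := fun Z => rhd Z X.
Definition deltaop (X : L) : L -> L := fun Z => torsion Z X.

Definition nablahat (X : L) (nu : L -> L) : L -> L :=
  fun Y => rhd X (nu Y) - nu (rhd X Y).

(* hat nabla_{X1} ... hat nabla_{Xm} nu, for Xs = [:: X1; ...; Xm] *)
Definition nablahat_iter (Xs : seq L) (nu : L -> L) : L -> L :=
  foldr nablahat nu Xs.

Inductive gen_subalg (S : (L -> L) -> Prop) : (L -> L) -> Prop :=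
  | gen_base nu : S nu -> gen_subalg S nu
  | gen_id : gen_subalg S id
  | gen_add nu mu : gen_subalg S nu -> gen_subalg S mu ->
      gen_subalg S (fun Z => nu Z + mu Z)
  | gen_scale (f : R) nu : gen_subalg S nu -> gen_subalg S (fun Z => f *: nu Z)
  | gen_comp nu mu : gen_subalg S nu -> gen_subalg S mu ->
      gen_subalg S (fun Z => nu (mu Z)).

Definition El_generators (nu : L -> L) : Prop :=
  exists (Xs : seq L) (Y : L),
    nu = nablahat_iter Xs (dop Y) \/ nu = nablahat_iter Xs (deltaop Y).

Definition El (nu : L -> L) : Prop := gen_subalg El_generators nu.

Definition d_delta_generators (nu : L -> L) : Prop :=
  exists Y : L, nu = dop Y \/ nu = deltaop Y.

End PLR.

From HB Require Import structures.
From mathcomp Require Import all_boot all_algebra.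
From Stdlib Require Import FunctionalExtensionality.
Set Implicit Arguments. Unset Strict Implicit.
Import GRing.Theory.
Local Open Scope ring_scope.

(* The dX and deltaX are the generators with m = 0.  Conversely, it suffices
   that the subalgebra A they generate is stable under every hat-nabla_X.
   Since hat-nabla_X is a derivation for composition, is additive, and by the
   Leibniz rule satisfies hat-nabla_X (f nu) = (X.f) nu + f hat-nabla_X nu,
   this reduces to the generators: flatness gives
   hat-nabla_X dY = d(X |> Y) - dY o dX + dY o deltaX, and parallel torsion
   gives hat-nabla_X deltaY = delta(X |> Y). *)

Section GeneratedSubalgebra.
Variables (k : fieldType) (R : comAlgType k) (L : lmodType R).
Implicit Types (S T : (L -> L) -> Prop) (nu mu : L -> L).

Lemma gen_subalg_mono S T nu :
  (forall mu, S mu -> gen_subalg T mu) -> gen_subalg S nu -> gen_subalg T nu.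
Proof.
move=> ST; elim=> {nu} [nu /ST //||nu mu _ ? _ ?|f nu _ ?|nu mu _ ? _ ?].
- exact: gen_id.
- exact: gen_add.
- exact: gen_scale.
- exact: gen_comp.
Qed.

Lemma gen_subalg_ext S nu mu : nu =1 mu -> gen_subalg S mu -> gen_subalg S nu.
Proof. by move=> /functional_extensionality ->. Qed.

Lemma gen_subalg_sub S nu mu : gen_subalg S nu -> gen_subalg S mu ->
  gen_subalg S (fun Z => nu Z - mu Z).
Proof.
move=> Snu Smu; apply: gen_subalg_ext (gen_add Snu (gen_scale (-1) Smu)) => Z.
by rewrite scaleN1r.
Qed.

Lemma gen_subalg_additive S nu : (forall mu, S mu -> {morph mu : a b / a + b}) ->
  gen_subalg S nu -> {morph nu : a b / a + b}.
Proof.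
move=> SD; elim=> {nu} [nu /SD //|//|nu mu _ nuD _ muD|f nu _ nuD|nu mu _ nuD _ muD] a b.
- by rewrite nuD muD addrACA.
- by rewrite nuD scalerDr.
- by rewrite muD nuD.
Qed.

End GeneratedSubalgebra.

Lemma morph_sub_of_add (V W : zmodType) (f : V -> W) :
  {morph f : a b / a + b} -> {morph f : a b / a - b}.
Proof. by move=> fD a b; apply/eqP; rewrite eq_sym subr_eq -fD subrK. Qed.

Section Connection.
Variables (k : fieldType) (R : comAlgType k) (L : lmodType R).
Variables (rho : L -> R -> R) (rhd : L -> L -> L).
Hypothesis rhdD : forall X Y Z, rhd X (Y + Z) = rhd X Y + rhd X Z.
Hypothesis rhd_leibniz : forall X (f : R) Y, rhd X (f *: Y) = rho X f *: Y + f *: rhd X Y.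

Lemma gen_subalg_nablahat (S : (L -> L) -> Prop) :
  (forall mu, S mu -> {morph mu : a b / a + b}) ->
  (forall mu X, S mu -> gen_subalg S (nablahat rhd X mu)) ->
  forall nu X, gen_subalg S nu -> gen_subalg S (nablahat rhd X nu).
Proof.
move=> SD Snabla nu X; elim=> {nu} [nu /Snabla //||nu mu _ Snu _ Smu
  |f nu Snu0 Snu|nu mu Snu0 Snu Smu0 Smu].
- apply: gen_subalg_ext (gen_scale 0 (gen_id S)) => Z.
  by rewrite /nablahat scale0r subrr.
- apply: gen_subalg_ext (gen_add Snu Smu) => Z.
  by rewrite /nablahat rhdD opprD addrACA.
- apply: gen_subalg_ext (gen_add (gen_scale (rho X f) Snu0) (gen_scale f Snu)) => Z.
  by rewrite /nablahat rhd_leibniz scalerBr addrA.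
- have nuB := morph_sub_of_add (gen_subalg_additive SD Snu0).
  apply: gen_subalg_ext (gen_add (gen_comp Snu Smu0) (gen_comp Snu0 Smu)) => Z.
  by rewrite /nablahat nuB addrA subrK.
Qed.

End Connection.

Section PostLieRinehart.
Variables (k : fieldType) (R : comAlgType k) (L : lmodType R).
Variables (br : L -> L -> L) (rho : L -> R -> R) (rhd : L -> L -> L).
Hypothesis PLR : is_post_Lie_Rinehart br rho rhd.

Local Notation d := (dop rhd).
Local Notation delta := (deltaop br rhd).
Local Notation generators := (d_delta_generators br rhd).

Lemma dop_additive Y : {morph d Y : a b / a + b}.
Proof. by move=> a b; rewrite /dop (rhd_addl PLR). Qed.

Lemma deltaop_additive Y : {morph delta Y : a b / a + b}.
Proof.
move=> a b; rewrite /deltaop /torsion (rhd_addl PLR) (rhd_addr PLR) (br_addl PLR).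
by rewrite !opprD (addrACA (rhd a Y)) (addrACA (rhd a Y - rhd Y a)).
Qed.

Lemma nablahat_dop X Y Z :
  nablahat rhd X (d Y) Z = d (rhd X Y) Z - d Y (d X Z) + d Y (delta X Z).
Proof.
rewrite /nablahat /deltaop /torsion !(morph_sub_of_add (dop_additive Y)).
rewrite [dop _ _ (br _ _)](rhd_flat PLR) /dop.
by rewrite opprB addrA subrKA addrC addrA subrK.
Qed.

Lemma nablahat_deltaop X Y : nablahat rhd X (delta Y) =1 delta (rhd X Y).
Proof. by move=> Z; rewrite /nablahat /deltaop /torsion (torsion_parallel PLR) addrC addKr. Qed.

Lemma d_delta_generators_additive nu : generators nu -> {morph nu : a b / a + b}.
Proof. by move=> [Y [->|->]]; [apply: dop_additive | apply: deltaop_additive]. Qed.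

Lemma gen_subalg_d_delta_nablahat X nu :
  gen_subalg generators nu -> gen_subalg generators (nablahat rhd X nu).
Proof.
apply: (gen_subalg_nablahat (rhd_addr PLR) (rhd_leibniz PLR) d_delta_generators_additive).
move=> _ {}X [Y [->|->]].
- apply: gen_subalg_ext (nablahat_dop X Y) _.
  apply: gen_add; first apply: gen_subalg_sub.
  + by apply: gen_base; exists (rhd X Y); left.
  + by apply: gen_comp; apply: gen_base; [exists Y | exists X]; left.
  + by apply: gen_comp; apply: gen_base; [exists Y; left | exists X; right].
- apply: gen_subalg_ext (nablahat_deltaop X Y) _.
  by apply: gen_base; exists (rhd X Y); right.
Qed.

Lemma El_generators_gen_subalg nu :
  El_generators br rhd nu -> gen_subalg generators nu.
Proof.
move=> [Xs [Y E]].
have [Sd Sdelta] : gen_subalg generators (d Y) /\ gen_subalg generators (delta Y).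
  by split; apply: gen_base; exists Y; [left | right].
by case: E => ->; elim: Xs => [|X Xs IH] //=; apply: gen_subalg_d_delta_nablahat.
Qed.

End PostLieRinehart.

Theorem proposition4p4 (k : fieldType) (R : comAlgType k) (L : lmodType R)
    (br : L -> L -> L) (rho : L -> R -> R) (rhd : L -> L -> L) :
  [pchar k] =i pred0 ->
  is_post_Lie_Rinehart br rho rhd ->
  forall nu : L -> L,
    El br rhd nu <-> gen_subalg (d_delta_generators br rhd) nu.
Proof.
move=> _ PLR nu; split; apply: gen_subalg_mono => mu.
- exact: El_generators_gen_subalg PLR mu.
- by move=> [Y E]; apply: gen_base; exists [::], Y.
Qed.
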